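(* Let $\mathcal{X}=\{x_k\}_{k=1}^m$ be a frame for a real or complex $n$-dimensional Hilbert space $\mathbb{H}^n$. Then the following are equivalent: (1) $\mathcal{X}$ is injective; (2) for every orthonormal basis $\mathcal{E}=\{e_j\}_{j=1}^n$ of $\mathbb{H}^n$, \[ \mathrm{span}\{(|\langle x_k,e_1\rangle|^2,|\langle x_k,e_2\rangle|^2,\dots,|\langle x_k,e_n\rangle|^2):k=1,\dots,m\}=\mathbb{R}^n.\]
   Context: A family $\{x_k\}$ of vectors in a Hilbert space is called injective if whenever a self-adjoint operator $T$ satisfies $\langle Tx_k,x_k\rangle=0$ for all $k$, then $T=0$. *)

From HB Require Import structures.
From mathcomp Require Import all_boot all_order all_algebra.
From mathcomp Require Import complex.
Set Implicit Arguments. Unset Strict Implicit. Unset Printing Implicit Defensive.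
Import Order.TTheory GRing.Theory Num.Theory.
Local Open Scope ring_scope.

Section Complex.
Variable R : rcfType.
Local Notation C := R[i].

Definition cdot n (u v : 'cV[C]_n) : C := \sum_(i < n) u i 0 * (v i 0)^*.

Definition cframe n m (x : 'I_m -> 'cV[C]_n) : Prop :=
  exists A B : C, [/\ 0 < A, 0 < B &
    forall f : 'cV[C]_n,
      A * cdot f f <= \sum_(k < m) `|cdot f (x k)| ^+ 2 <= B * cdot f f].

Definition cselfadj n (T : 'M[C]_n) : Prop := T = map_mx Num.conj (T^T).

Definition cinjective n m (x : 'I_m -> 'cV[C]_n) : Prop :=
  forall T : 'M[C]_n, cselfadj T ->
    (forall k, cdot (T *m x k) (x k) = 0) -> T = 0.

Definition cONB n (e : 'I_n -> 'cV[C]_n) : Prop :=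
  (forall i j, cdot (e i) (e j) = (i == j)%:R) /\
  row_full (\matrix_(i < n) (e i)^T).

Definition cabsmx n m (x : 'I_m -> 'cV[C]_n) (e : 'I_n -> 'cV[C]_n)
  : 'M[R]_(m, n) := \matrix_(k < m, j < n) complex.Re (`|cdot (x k) (e j)| ^+ 2).
End Complex.

Section Real.
Variable R : rcfType.

Definition rdot n (u v : 'cV[R]_n) : R := \sum_(i < n) u i 0 * v i 0.

Definition rframe n m (x : 'I_m -> 'cV[R]_n) : Prop :=
  exists A B : R, [/\ 0 < A, 0 < B &
    forall f : 'cV[R]_n,
      A * rdot f f <= \sum_(k < m) `|rdot f (x k)| ^+ 2 <= B * rdot f f].

Definition rselfadj n (T : 'M[R]_n) : Prop := T = T^T.

Definition rinjective n m (x : 'I_m -> 'cV[R]_n) : Prop :=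
  forall T : 'M[R]_n, rselfadj T ->
    (forall k, rdot (T *m x k) (x k) = 0) -> T = 0.

Definition rONB n (e : 'I_n -> 'cV[R]_n) : Prop :=
  (forall i j, rdot (e i) (e j) = (i == j)%:R) /\
  row_full (\matrix_(i < n) (e i)^T).

Definition rabsmx n m (x : 'I_m -> 'cV[R]_n) (e : 'I_n -> 'cV[R]_n)
  : 'M[R]_(m, n) := \matrix_(k < m, j < n) `|rdot (x k) (e j)| ^+ 2.
End Real.

From HB Require Import structures.
From mathcomp Require Import all_boot all_order all_algebra.
From mathcomp Require Import complex.
Import Order.TTheory GRing.Theory Num.Theory.
Local Open Scope ring_scope.
Local Open Scope sesquilinear_scope.

Set Implicit Arguments. Unset Strict Implicit. Unset Printing Implicit Defensive.

(** For an orthonormal basis [e] with coordinate matrix [E] and a real vector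
    [a], the operator [T = E^* diag(a) E] is self-adjoint and
    [<T x_k, x_k> = sum_j a_j |<x_k, e_j>|^2], the [k]-th entry of [M a] where
    [M] is the matrix of squared moduli of the statement. A nonzero [a] with
    [M a = 0] therefore gives a nonzero self-adjoint [T] killing every
    [<T x_k, x_k>]; conversely, by the spectral theorem every self-adjoint [T]
    is of this form for some orthonormal basis, with [a = 0] iff [T = 0]. *)

Lemma diag_mx_eq0 (K : pzRingType) n (d : 'rV[K]_n) : (diag_mx d == 0) = (d == 0).
Proof.
apply/eqP/eqP => [/matrixP d0 | ->]; last by apply/matrixP => i j; rewrite !mxE mul0rn.
by apply/rowP => j; have := d0 j j; rewrite !mxE eqxx mulr1n.
Qed.

Lemma mulmx_sandwich_eq0 (K : pzRingType) n (E E' D : 'M[K]_n) :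
  E *m E' = 1%:M -> E' *m D *m E = 0 -> D = 0.
Proof.
move=> EE' D0; have -> : D = E *m (E' *m D *m E) *m E'.
  by rewrite !mulmxA EE' mul1mx -mulmxA EE' mulmx1.
by rewrite D0 mulmx0 mul0mx.
Qed.

Lemma row_full_trP (K : fieldType) m n (M : 'M[K]_(m, n)) :
  reflect (forall a : 'rV_n, a *m M^T = 0 -> a = 0) (row_full M).
Proof.
rewrite /row_full -mxrank_tr; apply: (iffP idP); last exact: inj_row_free.
by move=> Mt_free a /eqP; rewrite mulmx_free_eq0 // => /eqP.
Qed.

Section Spectral.
Variable R : rcfType.
Local Notation C := R[i].

Lemma conj_real_complex (r : R) : (real_complex R r)^* = real_complex R r.
Proof. by rewrite conj_Creal // complex_real. Qed.

Lemma hermitian_unitary_diag n (T : 'M[C]_n) : T = T^t* ->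
  exists2 P : 'M[C]_n, P \is unitarymx &
    exists d : 'rV[R]_n, T = P^t* *m diag_mx (map_mx (real_complex R) d) *m P.
Proof.
move=> Therm; have {}Therm : T \is hermsymmx.
  by apply/is_hermitianmxP; rewrite expr0 scale1r.
have /orthomx_spectralP TE := hermitian_normalmx Therm.
exists (spectralmx T); first exact: spectral_unitarymx.
exists (map_mx (@complex.Re R) (spectral_diag T)).
rewrite [LHS]TE invmx_unitary ?spectral_unitarymx //; congr (_ *m diag_mx _ *m _).
apply/rowP => j; rewrite !mxE RRe_real //.
exact: (mxOverP (hermitian_spectral_diag_real Therm)).
Qed.

(* The complexification of [T] is Hermitian, so its spectral decomposition has a real
   eigenvalue, which is then an eigenvalue of [T] itself. *)
Lemma symmetric_eigenvalue n (T : 'M[R]_n.+1) : T^T = T -> exists c, eigenvalue T c.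
Proof.
move=> Tsym; set TC := map_mx (real_complex R) T.
have : TC = TC^t*.
  by apply/matrixP => i j; rewrite !mxE -[in LHS]Tsym mxE conj_real_complex.
move=> /hermitian_unitary_diag [P Pu [d TCE]].
exists (d 0 0); rewrite -(eigenvalue_map (real_complex R)) -/TC.
apply/eigenvalueP; exists (row 0 P).
  rewrite TCE -row_mul !mulmxA (unitarymxP Pu) mul1mx row_mul row_diag_mx.
  by rewrite -scalemxAl -rowE mxE.
apply/eqP => P0; move/unitarymxP: Pu => /(congr1 (row 0)).
rewrite row_mul P0 mul0mx row1 => /rowP/(_ 0); rewrite !mxE eqxx /=.
by move/eqP; rewrite eq_sym oner_eq0.
Qed.

Lemma rV_dot_gt0 n (v : 'rV[R]_n) : v != 0 -> 0 < (v *m v^T) 0 0.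
Proof.
have sq_ge0 j : 0 <= v 0 j * v^T j 0 by rewrite mxE -expr2 sqr_ge0.
move=> v0; rewrite mxE lt_def sumr_ge0 // andbT.
apply: contra v0 => /eqP/psumr_eq0P v2_0; apply/eqP/rowP => j.
by have /eqP := v2_0 (fun j _ => sq_ge0 j) j isT; rewrite !mxE -expr2 sqrf_eq0 => /eqP.
Qed.

Lemma rV_normalize n (v : 'rV[R]_n) : v != 0 ->
  exists k : R, (k *: v) *m (k *: v)^T = 1%:M.
Proof.
move=> /rV_dot_gt0; set s := (v *m v^T) 0 0 => s_gt0.
exists (Num.sqrt s)^-1; rewrite linearZ /= -scalemxAr -scalemxAl scalerA.
rewrite [v *m v^T]mx11_scalar -/s -mul_mx_scalar -scalar_mxM -expr2 exprVn.
by rewrite sqr_sqrtr ?ltW // divff ?lt0r_neq0.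
Qed.

Lemma symmetric_unit_eigenvector n (T : 'M[R]_n.+1) : T^T = T ->
  exists c (v : 'rV[R]_n.+1), v *m v^T = 1%:M /\ v *m T = c *: v.
Proof.
move=> /symmetric_eigenvalue [c /eigenvalueP [v vT v0]].
have [k kv1] := rV_normalize v0.
by exists c, (k *: v); split; rewrite // -scalemxAl vT scalerA mulrC -scalerA.
Qed.

Definition reflmx n (w : 'rV[R]_n) : 'M[R]_n :=
  1%:M - (2 / (w *m w^T) 0 0) *: (w^T *m w).

Lemma tr_reflmx n (w : 'rV[R]_n) : (reflmx w)^T = reflmx w.
Proof. by rewrite linearB /= linearZ /= trmx_mul trmxK trmx1. Qed.

Lemma reflmxK n (w : 'rV[R]_n) : w != 0 -> reflmx w *m reflmx w = 1%:M.
Proof.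
move=> /rV_dot_gt0; set s := (w *m w^T) 0 0 => s_gt0.
have ww : (w^T *m w) *m (w^T *m w) = s *: (w^T *m w).
  by rewrite mulmxA -(mulmxA w^T) [w *m w^T]mx11_scalar mul_mx_scalar -scalemxAl.
rewrite /reflmx -/s; move: (w^T *m w) ww => A AA.
rewrite mulmxBl !mulmxBr !mul1mx mulmx1 -scalemxAr -scalemxAl AA !scalerA.
have -> : 2 / s * (2 / s) * s = 2 / s + 2 / s.
  by rewrite -mulrA divfK ?lt0r_neq0 // mulr_natr mulr2n.
by rewrite scalerDl opprB addrK subrK.
Qed.

Lemma reflmx_swap n (u v : 'rV[R]_n) : u *m u^T = v *m v^T -> u != v ->
  u *m reflmx (u - v) = v.
Proof.
move=> uv; rewrite -subr_eq0; set w := u - v => w0.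
have /rV_dot_gt0 := w0; set s := (w *m w^T) 0 0 => s_gt0.
set t := (u *m w^T) 0 0.
have vu : v *m u^T = u *m v^T.
  by rewrite -[LHS]trmxK trmx_mul trmxK [LHS]mx11_scalar [RHS]mx11_scalar mxE.
have s2t : s = 2 * t.
  have vw : v *m w^T = - (u *m w^T) by rewrite /w linearB /= !mulmxBr vu uv opprB.
  have ww : w *m w^T = (u *m w^T) *+ 2 by rewrite {1}/w mulmxBl vw opprK mulr2n.
  by rewrite /s /t ww mxE mulr_natl.
rewrite /reflmx -/s mulmxBr mulmx1 -scalemxAr mulmxA [u *m w^T]mx11_scalar -/t.
rewrite mul_scalar_mx scalerA s2t invfM mulrA mulfV ?pnatr_eq0 // mul1r mulVf.
  by rewrite scale1r /w opprB addrC subrK.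
by apply: contraTneq s_gt0 => t0; rewrite s2t t0 mulr0 ltxx.
Qed.

Lemma householder n (u v : 'rV[R]_n) : u *m u^T = v *m v^T ->
  exists Q : 'M[R]_n, [/\ Q^T = Q, Q *m Q = 1%:M & u *m Q = v].
Proof.
move=> uv; have [<-|u_neq_v] := eqVneq u v.
  by exists 1%:M; split; rewrite ?trmx1 ?mulmx1.
exists (reflmx (u - v)); split; first exact: tr_reflmx.
  by rewrite reflmxK // subr_eq0.
exact: reflmx_swap.
Qed.

(* A reflection sending the first basis vector to a unit eigenvector of [T]
   splits off that eigenvector. *)
Lemma symmetric_deflation n (T : 'M[R]_(1 + n)) : T^T = T ->
  exists Q : 'M[R]_(1 + n), exists c : R, exists2 T' : 'M[R]_n, T'^T = T' &
    [/\ Q^T = Q, Q *m Q = 1%:M & Q *m T *m Q = block_mx c%:M 0 0 T'].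
Proof.
move=> Tsym; have [c [v [v1 vT]]] := symmetric_unit_eigenvector Tsym.
pose e : 'rV[R]_(1 + n) := row_mx 1%:M 0.
have e_def : usubmx (1%:M : 'M[R]_(1 + n)) = e.
  by rewrite (scalar_mx_block 1 n 1) block_mxEv col_mxKu.
have e1 : e *m e^T = 1%:M.
  by rewrite tr_row_mx mul_row_col trmx0 trmx1 mulmx0 addr0 mulmx1.
have [Q [Qsym QQ eQ]] := householder (etrans e1 (esym v1)).
set T1 := Q *m T *m Q; have T1sym : T1^T = T1 by rewrite /T1 !trmx_mul Qsym Tsym mulmxA.
have uT1 : usubmx T1 = row_mx c%:M 0.
  rewrite /T1 -!mul_usub_mx -[Q in usubmx Q]mul1mx -mul_usub_mx e_def eQ vT.
  by rewrite -scalemxAl -eQ -mulmxA QQ mulmx1 scale_row_mx scaler0 scalemx1.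
have ulT1 : ulsubmx T1 = c%:M by rewrite /ulsubmx uT1 row_mxKl.
have urT1 : ursubmx T1 = 0 by rewrite /ursubmx uT1 row_mxKr.
have dlT1 : dlsubmx T1 = 0 by rewrite -T1sym -trmx_ursub urT1 trmx0.
exists Q, c, (drsubmx T1); first by rewrite trmx_drsub T1sym.
by split; rewrite // -ulT1 -urT1 -dlT1 submxK.
Qed.

Theorem symmetric_orthogonal_diag n (T : 'M[R]_n) : T^T = T ->
  exists2 E : 'M[R]_n, E *m E^T = 1%:M &
    exists d : 'rV[R]_n, T = E^T *m diag_mx d *m E.
Proof.
elim: n T => [|n IH] T Tsym.
  by exists 1%:M; [rewrite trmx1 mulmx1 | exists 0; rewrite [T]thinmx0 [_ *m _]thinmx0].
have [Q [c [T' T'sym [Qsym QQ QTQ]]]] :=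
  symmetric_deflation (Tsym : T^T = T :> 'M_(1 + n)).
have [E' E'E' [d' T'E]] := IH T' T'sym.
pose B : 'M[R]_(1 + n) := block_mx 1%:M 0 0 E'.
have BB : B *m B^T = 1%:M.
  rewrite tr_block_mx !trmx0 trmx1 mulmx_block.
  by rewrite !(mulmx0, mul0mx, mulmx1, addr0, add0r) E'E' -scalar_mx_block.
have BdB : B^T *m diag_mx (row_mx c%:M d') *m B = block_mx c%:M 0 0 T'.
  rewrite tr_block_mx !trmx0 trmx1 diag_mx_row !mulmx_block T'E.
  rewrite !(mulmx0, mul0mx, mulmx1, mul1mx, addr0, add0r).
  by rewrite [diag_mx c%:M]mx11_scalar !mxE.
exists (B *m Q).
  by rewrite trmx_mul Qsym -mulmxA (mulmxA Q) QQ mul1mx BB.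
exists (row_mx c%:M d').
rewrite trmx_mul Qsym !mulmxA -(mulmxA Q) -(mulmxA Q) BdB -QTQ.
by rewrite !mulmxA QQ mul1mx -mulmxA QQ mulmx1.
Qed.

End Spectral.

Definition basis_mx (K : Type) n (e : 'I_n -> 'cV[K]_n) : 'M[K]_n :=
  \matrix_(i < n) (e i)^T.

Lemma basis_mx_row (K : Type) n (E : 'M[K]_n) : basis_mx (fun i => (row i E)^T) = E.
Proof. by apply/matrixP => i j; rewrite !mxE. Qed.

Section RealFrames.
Variable R : rcfType.

Lemma rdotE n (u v : 'cV[R]_n) : rdot u v = (v^T *m u) 0 0.
Proof. by rewrite mxE; apply: eq_bigr => l _; rewrite mxE mulrC. Qed.

Lemma mul_basis_mx n (e : 'I_n -> 'cV[R]_n) (v : 'cV[R]_n) j :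
  (basis_mx e *m v) j 0 = rdot v (e j).
Proof. by rewrite mxE; apply: eq_bigr => l _; rewrite !mxE mulrC. Qed.

Lemma rONB_orthogonal n (e : 'I_n -> 'cV[R]_n) :
  rONB e -> basis_mx e *m (basis_mx e)^T = 1%:M.
Proof.
move=> [eON _]; apply/matrixP => i j; rewrite !mxE -eON.
by apply: eq_bigr => l _; rewrite !mxE.
Qed.

Lemma orthogonal_rONB n (E : 'M[R]_n) : E *m E^T = 1%:M -> rONB (fun i => (row i E)^T).
Proof.
move=> EE; split=> [i j|].
  have /matrixP/(_ i j) := EE; rewrite !mxE => <-.
  by apply: eq_bigr => l _; rewrite !mxE.
have := basis_mx_row E; rewrite /basis_mx => ->.
by rewrite row_full_unit; case/mulmx1_unit: EE.
Qed.

Lemma diag_mx_form n (a : 'rV[R]_n) (y : 'cV[R]_n) :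
  (y^T *m diag_mx a *m y) 0 0 = \sum_j a 0 j * y j 0 ^+ 2.
Proof.
rewrite mul_mx_diag mxE; apply: eq_bigr => j _.
by rewrite !mxE mulrAC mulrC expr2.
Qed.

Lemma rdot_diag_basis n m (x : 'I_m -> 'cV[R]_n) (e : 'I_n -> 'cV[R]_n)
    (a : 'rV[R]_n) k :
  rdot ((basis_mx e)^T *m diag_mx a *m basis_mx e *m x k) (x k) =
  (a *m (rabsmx x e)^T) 0 k.
Proof.
rewrite rdotE !mulmxA -trmx_mul -mulmxA diag_mx_form mxE; apply: eq_bigr => j _.
by rewrite mul_basis_mx !mxE real_normK ?num_real.
Qed.

Lemma rinjective_absmx_full n m (x : 'I_m -> 'cV[R]_n) :
  rinjective x <-> forall e : 'I_n -> 'cV[R]_n, rONB e -> row_full (rabsmx x e).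
Proof.
split=> [xinj e /rONB_orthogonal EE | absfull T Tsym Tx0].
  apply/row_full_trP => a aM0; apply/eqP; rewrite -diag_mx_eq0; apply/eqP.
  apply: (mulmx_sandwich_eq0 EE); apply: xinj => [|k].
    by rewrite /rselfadj !trmx_mul tr_diag_mx trmxK mulmxA.
  by rewrite rdot_diag_basis aM0 mxE.
have [E EE [d TE]] := symmetric_orthogonal_diag (esym Tsym).
have /absfull/row_full_trP d0 := orthogonal_rONB EE.
rewrite TE [d]d0 ?linear0 ?mulmx0 ?mul0mx //; apply/rowP => k.
by rewrite -rdot_diag_basis basis_mx_row -TE Tx0 mxE.
Qed.

End RealFrames.

Section ComplexFrames.
Variable R : rcfType.
Local Notation C := R[i].

Definition cbasis_mx n (e : 'I_n -> 'cV[C]_n) : 'M[C]_n := \matrix_(i < n) (e i)^t*.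

Lemma cbasis_mx_row n (P : 'M[C]_n) : cbasis_mx (fun i => (row i P)^t*) = P.
Proof. by apply/matrixP => i j; rewrite !mxE conjCK. Qed.

Lemma cdotE n (u v : 'cV[C]_n) : cdot u v = (v^t* *m u) 0 0.
Proof. by rewrite mxE; apply: eq_bigr => l _; rewrite !mxE mulrC. Qed.

Lemma mul_cbasis_mx n (e : 'I_n -> 'cV[C]_n) (v : 'cV[C]_n) j :
  (cbasis_mx e *m v) j 0 = cdot v (e j).
Proof. by rewrite mxE; apply: eq_bigr => l _; rewrite !mxE mulrC. Qed.

Lemma cONB_unitary n (e : 'I_n -> 'cV[C]_n) : cONB e -> cbasis_mx e \is unitarymx.
Proof.
move=> [eON _]; apply/unitarymxP/matrixP => i j; rewrite !mxE eq_sym -eON.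
by apply: eq_bigr => l _; rewrite !mxE conjCK mulrC.
Qed.

Lemma unitary_cONB n (P : 'M[C]_n) : P \is unitarymx -> cONB (fun i => (row i P)^t*).
Proof.
move=> Pu; split=> [i j|].
  have /matrixP/(_ j i) := unitarymxP Pu; rewrite !mxE eq_sym => <-.
  by apply: eq_bigr => l _; rewrite !mxE conjCK mulrC.
have -> : \matrix_(i < n) ((row i P)^t*)^T = P ^ Num.conj.
  by apply/matrixP => i j; rewrite !mxE.
by rewrite row_full_map row_full_unit unitarymx_unit.
Qed.

Lemma cdiag_mx_form n (a : 'rV[C]_n) (y : 'cV[C]_n) :
  (y^t* *m diag_mx a *m y) 0 0 = \sum_j a 0 j * `|y j 0| ^+ 2.
Proof.
rewrite mul_mx_diag mxE; apply: eq_bigr => j _.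
by rewrite !mxE normCK mulrAC mulrC [_^* * _]mulrC.
Qed.

Lemma cdot_diag_basis n m (x : 'I_m -> 'cV[C]_n) (e : 'I_n -> 'cV[C]_n)
    (a : 'rV[R]_n) k :
  cdot ((cbasis_mx e)^t* *m diag_mx (map_mx (real_complex R) a) *m cbasis_mx e *m x k)
       (x k) =
  real_complex R ((a *m (cabsmx x e)^T) 0 k).
Proof.
rewrite cdotE !mulmxA -map_mxM -trmx_mul -mulmxA cdiag_mx_form !mxE rmorph_sum.
apply: eq_bigr => j _; rewrite mul_cbasis_mx !mxE rmorphM -[`|_| ^+ 2]RRe_real //.
by rewrite rpredX ?normr_real.
Qed.

Lemma trmxC_diag_real n (a : 'rV[R]_n) :
  (diag_mx (map_mx (real_complex R) a))^t* = diag_mx (map_mx (real_complex R) a).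
Proof.
rewrite tr_diag_mx map_diag_mx; congr diag_mx; apply/rowP => j; rewrite !mxE.
exact: conj_real_complex.
Qed.

Lemma cinjective_absmx_full n m (x : 'I_m -> 'cV[C]_n) :
  cinjective x <-> forall e : 'I_n -> 'cV[C]_n, cONB e -> row_full (cabsmx x e).
Proof.
split=> [xinj e /cONB_unitary/unitarymxP EE | absfull T Therm Tx0].
  apply/row_full_trP => a aM0; apply/eqP.
  rewrite -(map_mx_eq0 (real_complex R)) -diag_mx_eq0; apply/eqP.
  apply: (mulmx_sandwich_eq0 EE); apply: xinj => [|k].
    by rewrite /cselfadj !trmx_mul !map_mxM trmxCK trmxC_diag_real mulmxA.
  by rewrite cdot_diag_basis aM0 mxE rmorph0.
have [P Pu [d TE]] := hermitian_unitary_diag Therm.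
have /absfull/row_full_trP d0 := unitary_cONB Pu.
rewrite TE [d]d0 ?map_mx0 ?linear0 ?mulmx0 ?mul0mx //; apply/rowP => k.
by apply: (@complexI R); rewrite -cdot_diag_basis cbasis_mx_row -TE Tx0 !mxE rmorph0.
Qed.

End ComplexFrames.

Theorem mainTheorem3 (R : rcfType) :
  (forall (n m : nat) (x : 'I_m -> 'cV[R]_n), rframe x ->
     (rinjective x <->
      forall e : 'I_n -> 'cV[R]_n, rONB e -> row_full (rabsmx x e)))
  /\
  (forall (n m : nat) (x : 'I_m -> 'cV[R[i]]_n), cframe x ->
     (cinjective x <->
      forall e : 'I_n -> 'cV[R[i]]_n, cONB e -> row_full (cabsmx x e))).
Proof.
by split=> n m x _; [exact: rinjective_absmx_full | exact: cinjective_absmx_full].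
Qed.
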